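(* Consider the FlexPD-F iterates described in the context with $\alpha,\beta>0$ and integer $T\ge1$, and let $U=I-\alpha B$. If $U\succ 0$, i.e. $\alpha<1/\rho(B)$, then for every $p>1$ and every $k\ge0$, \[\|x^{k+1,T-1}-x^*\|_U^2+\frac{\alpha}{\beta}\|\lambda^k-\lambda^*\|^2\le \Gamma_F^{T-1}\Big(\|x^k-x^*\|_U^2+\frac{\alpha}{\beta}\|\lambda^k-\lambda^*\|^2\Big),\] where \[\Gamma_F=\max\Big\{1+\frac{p\alpha\beta\rho(AA')}{p-1},\; p\Big(\sqrt{\rho(U)}+\alpha L\sqrt{\rho(U^{-1})}\Big)^2\Big\}.\]
   Context: Setting: $n$ agents are connected by a connected undirected graph with edge set $\mathcal E$, $\epsilon=|\mathcal E|$. For $x\in\mathbb R^n$ let $f(x)=\sum_{i=1}^n f_i(x_i)$, where each $f_i:\mathbb R\to\mathbb R$ is twice differentiable with $m\le f_i''\le L$ for constants $0<m\le L$; $\nabla f(x)=(f_1'(x_1),\dots,f_n'(x_n))'$. $A\in\mathbb R^{\epsilon\times n}$ is the edge–node incidence matrix (null space spanned by the all-ones vector). $B\in\mathbb R^{n\times n}$ is symmetric positive semidefinite with the same null space as $A$, off-diagonal entries nonzero only on edges. $x^*$ is the unique minimizer of $f$ subject to $Ax=0$ and $\lambda^*$ a Lagrange multiplier with $\nabla f(x^* )+A'\lambda^*=0$, $Ax^*=0$, $Bx^*=0$, chosen in the column space of $A$. FlexPD-F: given $\alpha,\beta>0$, $T\ge1$, $x^0$ arbitrary, $\lambda^0=0$;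 for $k\ge0$: $x^{k+1,0}=x^k$, $x^{k+1,t}=(I-\alpha B)x^{k+1,t-1}-\alpha\nabla f(x^{k+1,t-1})-\alpha A'\lambda^k$ for $t=1,\dots,T$, $x^{k+1}=x^{k+1,T}$, $\lambda^{k+1}=\lambda^k+\beta Ax^{k+1}$. Notation: $\rho(S)$ is the largest eigenvalue of a symmetric matrix $S$ (if $B=0$, $1/\rho(B)=\infty$); $\|v\|_S^2=v'Sv$; $\|\cdot\|$ is the Euclidean norm. *)

From HB Require Import structures.
From mathcomp Require Import all_boot all_order all_algebra.
From mathcomp Require Import all_classical all_reals all_analysis.
Set Implicit Arguments. Unset Strict Implicit. Unset Printing Implicit Defensive.
Import Order.TTheory GRing.Theory Num.Theory.
Local Open Scope ring_scope.

Section Defs.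
Variable R : realType.

Definition qnorm (k : nat) (S : 'M[R]_k) (v : 'cV[R]_k) : R := (v^T *m S *m v) 0 0.

Definition sqnorm (k : nat) (v : 'cV[R]_k) : R := (v^T *m v) 0 0.

Definition posdef (k : nat) (S : 'M[R]_k) : Prop :=
  S^T = S /\ forall v : 'cV[R]_k, v != 0 -> 0 < qnorm S v.

Definition psd (k : nat) (S : 'M[R]_k) : Prop :=
  S^T = S /\ forall v : 'cV[R]_k, 0 <= qnorm S v.

Definition is_rho (k : nat) (S : 'M[R]_k) (r : R) : Prop :=
  eigenvalue S r /\ forall a, eigenvalue S a -> a <= r.

Definition adj (n eps : nat) (E : 'I_eps -> 'I_n * 'I_n) : rel 'I_n :=
  fun i j => [exists e, (E e == (i, j)) || (E e == (j, i))].

Definition simple_connected_graph (n eps : nat) (E : 'I_eps -> 'I_n * 'I_n) : Prop :=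
  (forall e, (E e).1 != (E e).2) /\
  (forall e e', E e = E e' \/ E e = ((E e').2, (E e').1) -> e = e') /\
  (forall i j : 'I_n, connect (adj E) i j).

(* edge-node incidence matrix (edge e oriented from (E e).1 to (E e).2) *)
Definition incidence (n eps : nat) (E : 'I_eps -> 'I_n * 'I_n) : 'M[R]_(eps, n) :=
  \matrix_(e < eps, i < n) (((i == (E e).1)%:R - (i == (E e).2)%:R) : R).

Definition fsum (n : nat) (fi : 'I_n -> R -> R) (x : 'cV[R]_n) : R :=
  \sum_(i < n) fi i (x i 0).

Definition grad (n : nat) (fi : 'I_n -> R -> R) (x : 'cV[R]_n) : 'cV[R]_n :=
  \col_i (derive1 (fi i) (x i 0)).

Definition inner_step (n eps : nat) (A : 'M[R]_(eps, n)) (B : 'M[R]_n)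
  (fi : 'I_n -> R -> R) (alpha : R) (lam : 'cV[R]_eps) (x : 'cV[R]_n) : 'cV[R]_n :=
  (1%:M - alpha *: B) *m x - alpha *: grad fi x - alpha *: (A^T *m lam).

(* x^{k+1,t} as a function of x^k and lambda^k *)
Definition inner_iter (n eps : nat) (A : 'M[R]_(eps, n)) (B : 'M[R]_n)
  (fi : 'I_n -> R -> R) (alpha : R) (lam : 'cV[R]_eps) (x : 'cV[R]_n) (t : nat)
  : 'cV[R]_n :=
  iter t (inner_step A B fi alpha lam) x.

(* (x^k, lambda^k) of FlexPD-F, lambda^0 = 0 *)
Fixpoint flexpd (n eps : nat) (A : 'M[R]_(eps, n)) (B : 'M[R]_n)
  (fi : 'I_n -> R -> R) (alpha beta : R) (T : nat) (x0 : 'cV[R]_n) (k : nat)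
  : 'cV[R]_n * 'cV[R]_eps :=
  match k with
  | 0 => (x0, 0)
  | k'.+1 =>
      let: (x, lam) := flexpd A B fi alpha beta T x0 k' in
      let x' := inner_iter A B fi alpha lam x T in
      (x', lam + beta *: (A *m x'))
  end.

End Defs.

From HB Require Import structures.
From mathcomp Require Import all_boot all_order all_algebra.
From mathcomp Require Import all_classical all_reals all_analysis.
From mathcomp Require Import complex ring lra.
Set Implicit Arguments. Unset Strict Implicit. Unset Printing Implicit Defensive.
Import Order.TTheory GRing.Theory Num.Theory.
Local Open Scope ring_scope.

(** The inner loop of FlexPD-F keeps λ fixed, so it suffices that one primal
    step contracts V(x) = ‖x - x⋆‖²_U + (α/β)‖λ - λ⋆‖² by Γ_F.  By the
    optimality conditions the error after a step is
    (U e - α(∇f(x) - ∇f(x⋆))) - α A'(λ - λ⋆) with e = x - x⋆.  Young's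
    inequality with weights p and p/(p-1) separates the two parts.  The primal
    part has U-norm at most (√ρ(U) + αL√ρ(U⁻¹))‖e‖_U, since 0 ≺ U ≼ I and ∇f is
    L-Lipschitz; the dual part has squared U-norm at most α²ρ(AA')‖λ - λ⋆‖².
    All spectral estimates come from writing v'S^k v = Σ c_i d_i^k with c_i ≥ 0
    and d_i eigenvalues of the symmetric matrix S. *)

Section NormalSpectral.
Local Open Scope sesquilinear_scope.
Variables (C : numClosedFieldType) (n : nat) (A : 'M[C]_n).
Hypothesis normalA : A \is normalmx.
Local Notation P := (spectralmx A).
Local Notation d := (spectral_diag A).

Lemma normalmx_expE k : A ^+ k = invmx P *m diag_mx (\row_j (d 0 j ^+ k)) *m P.
Proof.
have eA := orthomx_spectralP normalA.
elim: k => [|k IHk].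
  have -> : diag_mx (\row_j (d 0 j ^+ 0)) = 1%:M.
    by apply/matrixP => i j; rewrite !mxE expr0.
  by rewrite expr0 mulmx1 mulVmx ?spectral_unit.
rewrite exprSr IHk -mulmxE [X in _ *m X = _]eA !mulmxA mulmxK ?spectral_unit //.
rewrite -[X in X *m P]mulmxA mulmx_diag.
by congr (_ *m diag_mx _ *m _); apply/rowP => j; rewrite !mxE exprSr.
Qed.

Lemma normalmx_form_expE k (u : 'rV_n) (w := u *m P^t*) :
  (u *m A ^+ k *m u ^t*) 0 0 = \sum_j d 0 j ^+ k * (w 0 j * (w 0 j)^*).
Proof.
rewrite normalmx_expE invmx_unitary ?spectral_unitarymx //.
have ew : P *m u^t* = w^t* by rewrite /w trmx_mul map_mxM trmxCK.
rewrite !mulmxA -/w -mulmxA ew mxE; apply: eq_bigr => j _.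
by rewrite mul_mx_diag !mxE mulrAC mulrC.
Qed.

Lemma eigenvalue_spectral_diag i : eigenvalue A (d 0 i).
Proof.
have eA := orthomx_spectralP normalA.
apply/eigenvalueP; exists (row i P).
  rewrite -row_mul [X in row i (_ *m X)]eA !mulmxA mulmxV ?spectral_unit // mul1mx.
  by rewrite row_mul row_diag_mx -scalemxAl -rowE.
apply/negP => /eqP rowi0.
move/unitarymxP: (spectral_unitarymx A) => /matrixP /(_ i i).
rewrite !mxE eqxx /= big1 => [/esym/eqP|j _]; first by rewrite oner_eq0.
by have := congr1 (fun M : 'rV[C]_n => M 0 j) rowi0; rewrite !mxE => ->; rewrite mul0r.
Qed.

End NormalSpectral.

Section SymmetricSpectral.
Local Open Scope sesquilinear_scope.

Lemma symmetric_spectral_moments (R : rcfType) n (S : 'M[R]_n) : S^T = S ->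
  exists d : 'I_n -> R, (forall i, eigenvalue S (d i)) /\
    forall v : 'cV[R]_n, exists c : 'I_n -> R, (forall i, 0 <= c i) /\
      forall k, (v^T *m S ^+ k *m v) 0 0 = \sum_i c i * d i ^+ k.
Proof.
move=> Ssym; pose f := real_complex R; pose SC := map_mx f S.
have conj_f x : (f x)^* = f x by apply: conj_Creal; rewrite /f complex_real.
have hermSC : SC \is hermsymmx.
  apply/is_hermitianmxP; rewrite expr0 scale1r; apply/matrixP => i j.
  by rewrite !mxE conj_f -{1}Ssym mxE.
have normalSC := hermitian_normalmx hermSC.
have dreal i : spectral_diag SC 0 i \is Num.real.
  by have /mxOverP := hermitian_spectral_diag_real hermSC; apply.
exists (fun i => complex.Re (spectral_diag SC 0 i)); split.
  move=> i; rewrite -(eigenvalue_map f).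
  by have := eigenvalue_spectral_diag normalSC i; rewrite -{1}(RRe_real (dreal i)).
move=> v; pose u := map_mx f v^T; pose w := u *m (spectralmx SC)^t*.
have wge0 i : 0 <= w 0 i * (w 0 i)^* by exact: mul_conjC_ge0.
exists (fun i => complex.Re (w 0 i * (w 0 i)^*)); split.
  by move=> i; move: (wge0 i); rewrite lecE /= => /andP[].
move=> k; apply: (@complexI R); rewrite -/(f _) -/(f (\sum_i _)).
have -> : f ((v^T *m S ^+ k *m v) 0 0) = (u *m SC ^+ k *m u ^t*) 0 0.
  have -> : u ^t* = map_mx f v by apply/matrixP => i j; rewrite !mxE conj_f.
  have -> : SC ^+ k = map_mx f (S ^+ k).
    by elim: k => [|k IHk]; rewrite ?expr0 ?map_mx1 // !exprS -!mulmxE map_mxM IHk.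
  by rewrite /u -!map_mxM [in RHS]mxE.
rewrite normalmx_form_expE // -/w /f rmorph_sum; apply: eq_bigr => i _.
rewrite rmorphM rmorphXn mulrC.
by rewrite -[in LHS](RRe_real (dreal i)) -[in LHS](RRe_real (ger0_real (wge0 i))).
Qed.

End SymmetricSpectral.

Section QuadraticForms.
Variables (R : realType) (n : nat).
Implicit Types (Q S : 'M[R]_n) (u v : 'cV[R]_n).

Definition bform Q u v : R := (u^T *m Q *m v) 0 0.

Lemma bformDl Q u v w : bform Q (u + v) w = bform Q u w + bform Q v w.
Proof. by rewrite /bform linearD /= !mulmxDl mxE. Qed.

Lemma bformDr Q u v w : bform Q w (u + v) = bform Q w u + bform Q w v.
Proof. by rewrite /bform !mulmxDr mxE. Qed.

Lemma bformZl Q x u w : bform Q (x *: u) w = x * bform Q u w.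
Proof. by rewrite /bform linearZ /= -!scalemxAl mxE. Qed.

Lemma bformZr Q x u w : bform Q w (x *: u) = x * bform Q w u.
Proof. by rewrite /bform -!scalemxAr mxE. Qed.

Lemma bform_sym Q u v : Q^T = Q -> bform Q u v = bform Q v u.
Proof.
move=> Qsym; rewrite /bform -[in LHS](trmxK (u^T *m Q *m v)) mxE.
by rewrite !trmx_mul trmxK Qsym mulmxA.
Qed.

Lemma qnormZ Q x v : qnorm Q (x *: v) = x ^+ 2 * qnorm Q v.
Proof. by rewrite /qnorm !linearZ /= -!scalemxAl !mxE mulrA -expr2. Qed.

Lemma qnormN Q v : qnorm Q (- v) = qnorm Q v.
Proof. by rewrite -scaleN1r qnormZ sqrrN expr1n mul1r. Qed.

Lemma qnorm_combE Q x y u v : Q^T = Q ->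
  qnorm Q (x *: u + y *: v) =
  x ^+ 2 * qnorm Q u + 2 * x * y * bform Q u v + y ^+ 2 * qnorm Q v.
Proof.
move=> Qsym; rewrite -[qnorm Q _]/(bform Q _ _).
rewrite !(bformDl, bformDr, bformZl, bformZr) (bform_sym v u Qsym).
rewrite /qnorm -/(bform Q u u) -/(bform Q v v); ring.
Qed.

Lemma qnorm_add_le Q u v s : psd Q -> 0 < s ->
  qnorm Q (u + v) <= (1 + s) * qnorm Q u + (1 + s^-1) * qnorm Q v.
Proof.
move=> [Qsym Qge0] s_gt0.
have := qnorm_combE 1 1 u v Qsym; rewrite !scale1r => ->.
have := Qge0 (s *: u + (-1) *: v); rewrite qnorm_combE // => cross_le.
suff : 2 * bform Q u v <= s * qnorm Q u + s^-1 * qnorm Q v by nra.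
rewrite -(ler_pM2l s_gt0) mulrDr [s * (s^-1 * _)]mulrA mulfV ?gt_eqF // mul1r.
nra.
Qed.

Lemma qnorm_add_sqr_le Q u v x y q : psd Q -> 0 < x -> 0 < y ->
  qnorm Q u <= x ^+ 2 * q -> qnorm Q v <= y ^+ 2 * q ->
  qnorm Q (u + v) <= (x + y) ^+ 2 * q.
Proof.
move=> psdQ x_gt0 y_gt0 Qu_le Qv_le.
have s_gt0 : 0 < y / x by rewrite divr_gt0.
apply: le_trans (qnorm_add_le u v psdQ s_gt0) _.
have -> : (x + y) ^+ 2 * q =
    (1 + y / x) * (x ^+ 2 * q) + (1 + (y / x)^-1) * (y ^+ 2 * q).
  by field; rewrite !gt_eqF.
by apply: lerD; apply: ler_wpM2l => //; rewrite addr_ge0 ?invr_ge0 ?ltW.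
Qed.

Lemma sqnormE v : sqnorm v = \sum_i v i 0 ^+ 2.
Proof. by rewrite /sqnorm mxE; apply: eq_bigr => i _; rewrite mxE expr2. Qed.

Lemma sqnorm_ge0 v : 0 <= sqnorm v.
Proof. by rewrite sqnormE sumr_ge0 // => i _; rewrite sqr_ge0. Qed.

Lemma sqnorm_gt0 v : v != 0 -> 0 < sqnorm v.
Proof.
move=> v_neq0; have [i vi_neq0] : exists i, v i 0 != 0.
  apply/existsP; apply: contraNT v_neq0 => /existsPn v0.
  by apply/eqP/matrixP => i j; rewrite ord1 mxE; apply/eqP/negbNE/v0.
rewrite sqnormE (bigD1 i) //= ltr_pwDl ?sumr_ge0 // => [|j _].
  by rewrite lt_def sqr_ge0 sqrf_eq0 vi_neq0.
exact: sqr_ge0.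
Qed.

Lemma qnorm_le_rho S r v : S^T = S -> (forall a, eigenvalue S a -> a <= r) ->
  qnorm S v <= r * sqnorm v.
Proof.
move=> Ssym Sle_r; have [d [eig_d moments]] := symmetric_spectral_moments Ssym.
have [c [c_ge0 vE]] := moments v.
have := vE 1%N; have := vE 0%N.
rewrite !expr0 !expr1 mulmx1 -/(sqnorm v) -/(qnorm S v) => -> ->.
rewrite mulr_sumr; apply: ler_sum => i _.
by rewrite mulr1 expr1 mulrC ler_wpM2r ?Sle_r.
Qed.

Lemma eigenvalue_qnorm S a :
  eigenvalue S a -> exists2 w, w != 0 & qnorm S w = a * sqnorm w.
Proof.
move=> /eigenvalueP [v vS v_neq0]; exists v^T.
  by apply: contra v_neq0 => /eqP vT0; rewrite -(trmxK v) vT0 trmx0.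
by rewrite /qnorm /sqnorm trmxK vS -scalemxAl mxE.
Qed.

Lemma eigenvalue_le_of_qnorm_le S r a :
  (forall v, qnorm S v <= r * sqnorm v) -> eigenvalue S a -> a <= r.
Proof.
move=> S_le /eigenvalue_qnorm [w w_neq0 Sw].
by have := S_le w; rewrite Sw ler_pM2r // sqnorm_gt0.
Qed.

Lemma posdef_eigenvalue_gt0 S a : posdef S -> eigenvalue S a -> 0 < a.
Proof.
move=> [_ S_gt0] /eigenvalue_qnorm [w w_neq0 Sw].
by have := S_gt0 w w_neq0; rewrite Sw pmulr_lgt0 // sqnorm_gt0.
Qed.

Lemma posdef_psd S : posdef S -> psd S.
Proof.
move=> [Ssym S_gt0]; split=> // v; have [->|v_neq0] := eqVneq v 0.
  by rewrite /qnorm mulmx0 mxE.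
exact/ltW/S_gt0.
Qed.

Lemma posdef_unitmx S : posdef S -> S \in unitmx.
Proof.
move=> [_ S_gt0]; rewrite -row_free_unit -kermx_eq0; apply/eqP/row_matrixP => i.
rewrite row0; apply/eqP; apply: contraT => ker_i_neq0.
have kerS : row i (kermx S) *m S = 0 by rewrite -row_mul mulmx_ker row0.
have w_neq0 : (row i (kermx S))^T != 0.
  by apply: contra ker_i_neq0 => /eqP wT0; rewrite -(trmxK (row i _)) wT0 trmx0.
by have := S_gt0 _ w_neq0; rewrite /qnorm trmxK kerS mul0mx mxE ltxx.
Qed.

Lemma unitmx_eigenvalue_neq0 S a : S \in unitmx -> eigenvalue S a -> a != 0.
Proof.
move=> Su /eigenvalueP [v vS v_neq0]; apply: contra v_neq0 => /eqP a0.
by move: vS; rewrite a0 scale0r => vS0; rewrite -(mulmxK Su v) vS0 mul0mx.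
Qed.

Lemma eigenvalue_invmx S a : S \in unitmx -> eigenvalue S a -> eigenvalue (invmx S) a^-1.
Proof.
move=> Su eigSa; have a_neq0 := unitmx_eigenvalue_neq0 Su eigSa.
move/eigenvalueP: eigSa => [v vS v_neq0]; apply/eigenvalueP; exists v => //.
apply: (canLR (mulmxK Su)).
by rewrite -scalemxAl vS scalerA mulVf // scale1r.
Qed.

Lemma posdef_invmx_eigenvalue_gt0 S b : posdef S -> eigenvalue (invmx S) b -> 0 < b.
Proof.
move=> Spd eigb.
have Sinv_u : invmx S \in unitmx by rewrite unitmx_inv posdef_unitmx.
have := eigenvalue_invmx Sinv_u eigb.
rewrite invmxK => /(posdef_eigenvalue_gt0 Spd); by rewrite invr_gt0.
Qed.

Lemma qnorm_mulmx_le S r v : S^T = S -> (forall a, eigenvalue S a -> 0 <= a <= r) ->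
  qnorm S (S *m v) <= r ^+ 2 * qnorm S v.
Proof.
move=> Ssym S_spec; have [d [eig_d moments]] := symmetric_spectral_moments Ssym.
have [c [c_ge0 vE]] := moments v.
have -> : qnorm S (S *m v) = (v^T *m S ^+ 3 *m v) 0 0.
  by rewrite /qnorm trmx_mul Ssym !exprS expr0 -!mulmxE mulmx1 !mulmxA.
have -> : qnorm S v = (v^T *m S ^+ 1 *m v) 0 0 by rewrite expr1.
rewrite !vE mulr_sumr; apply: ler_sum => i _.
have /andP[d_ge0 d_le] := S_spec _ (eig_d i).
have cd_ge0 : 0 <= c i * d i by rewrite mulr_ge0.
have dd_le : d i * d i <= r * r by rewrite ler_pM.
rewrite !exprS !expr0 !mulr1; nra.
Qed.

Lemma sqnorm_le_qnorm S r v : posdef S ->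
  (forall b, eigenvalue (invmx S) b -> b <= r) -> sqnorm v <= r * qnorm S v.
Proof.
move=> Spd Sinv_le; have [d [eig_d moments]] := symmetric_spectral_moments Spd.1.
have [c [c_ge0 vE]] := moments v.
have := vE 1%N; have := vE 0%N.
rewrite !expr0 !expr1 mulmx1 -/(sqnorm v) -/(qnorm S v) => -> ->.
rewrite mulr_sumr; apply: ler_sum => i _.
have d_gt0 := posdef_eigenvalue_gt0 Spd (eig_d i).
have dinv_le := Sinv_le _ (eigenvalue_invmx (posdef_unitmx Spd) (eig_d i)).
have one_le : 1 <= r * d i by rewrite -(mulVf (lt0r_neq0 d_gt0)) ler_pM2r.
by rewrite expr1 mulr1 mulrCA -{1}(mulr1 (c i)) ler_wpM2l.
Qed.

Lemma qnorm_shift_le B alpha v : psd B -> 0 <= alpha ->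
  qnorm (1%:M - alpha *: B) v <= sqnorm v.
Proof.
move=> [_ B_ge0] alpha_ge0.
rewrite /qnorm /sqnorm mulmxBr mulmx1 mulmxBl -scalemxAr -scalemxAl !mxE.
by rewrite gerBl mulr_ge0 //; have := B_ge0 v; rewrite /qnorm mxE.
Qed.

End QuadraticForms.

Lemma derive1_bounded_lipschitz (R : realType) (h : R -> R) (L : R) :
  (forall x, derivable h x 1) -> (forall x, `|derive1 h x| <= L) ->
  forall a b, `|h a - h b| <= L * `|a - b|.
Proof.
move=> h_derivable h'_le.
suff lt_case a b : a < b -> `|h b - h a| <= L * `|b - a|.
  move=> a b; case: (ltgtP a b) => [/lt_case|/lt_case|->].
  - by rewrite distrC [`|a - b|]distrC.
  - by [].
  - by rewrite !subrr normr0 mulr0.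
move=> ab; have [c _ ->] := @MVT R h (derive1 h) a b ab
  (fun x _ => ltac:(rewrite derive1E; exact: derivableP))
  (derivable_within_continuous (fun x _ => h_derivable x)).
by rewrite normrM ler_wpM2r.
Qed.

Lemma sqnorm_grad_sub_le (R : realType) n (fi : 'I_n -> R -> R) L x y :
  (forall i x, derivable (derive1 (fi i)) x 1) ->
  (forall i x, `|derive1 (derive1 (fi i)) x| <= L) ->
  sqnorm (grad fi x - grad fi y) <= L ^+ 2 * sqnorm (x - y).
Proof.
move=> dfi_derivable d2fi_le; rewrite !sqnormE mulr_sumr; apply: ler_sum => i _.
have := derive1_bounded_lipschitz (dfi_derivable i) (d2fi_le i) (x i 0) (y i 0).
have L_ge0 : 0 <= L := le_trans (normr_ge0 _) (d2fi_le i 0).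
rewrite !mxE -exprMn => lip.
rewrite -(real_normK (num_real (_ - _))) -(real_normK (num_real (L * _))).
by rewrite ler_sqr ?nnegrE // normrM (ger0_norm L_ge0).
Qed.

Section InnerStepContraction.
Variables (R : realType) (n eps : nat) (A : 'M[R]_(eps, n)) (B : 'M[R]_n).
Variables (fi : 'I_n -> R -> R) (L alpha beta p rhoAA rhoU rhoUinv : R).
Variables (xstar : 'cV[R]_n) (lamstar : 'cV[R]_eps).

Local Notation U := (1%:M - alpha *: B).
Local Notation Gamma := (Num.max (1 + p * alpha * beta * rhoAA / (p - 1))
  (p * (Num.sqrt rhoU + alpha * L * Num.sqrt rhoUinv) ^+ 2)).
Local Notation lyapunov x lam :=
  (qnorm U (x - xstar) + alpha / beta * sqnorm (lam - lamstar)).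

Hypotheses (psdB : psd B) (posdefU : posdef U).
Hypotheses (alpha_gt0 : 0 < alpha) (beta_gt0 : 0 < beta) (p_gt1 : 1 < p) (L_gt0 : 0 < L).
Hypothesis dfi_derivable : forall i x, derivable (derive1 (fi i)) x 1.
Hypothesis d2fi_le : forall i x, `|derive1 (derive1 (fi i)) x| <= L.
Hypotheses (kkt : grad fi xstar + A^T *m lamstar = 0) (Bxstar : B *m xstar = 0).
Hypotheses (rhoAA_spec : is_rho (A *m A^T) rhoAA) (rhoU_spec : is_rho U rhoU).
Hypothesis rhoUinv_spec : is_rho (invmx U) rhoUinv.

Lemma inner_step_subE lam x :
  inner_step A B fi alpha lam x - xstar =
  (U *m (x - xstar) - alpha *: (grad fi x - grad fi xstar))
    - alpha *: (A^T *m (lam - lamstar)).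
Proof.
have Uxstar : U *m xstar = xstar.
  by rewrite mulmxBl mul1mx -scalemxAl Bxstar scaler0 subr0.
have grad_xstar : grad fi xstar = - (A^T *m lamstar).
  by apply/eqP; rewrite -addr_eq0 kkt.
rewrite /inner_step !mulmxBr Uxstar grad_xstar.
by apply/matrixP => i j; rewrite !mxE; ring.
Qed.

Lemma primal_error_le x :
  qnorm U (U *m (x - xstar) - alpha *: (grad fi x - grad fi xstar))
  <= (Num.sqrt rhoU + alpha * L * Num.sqrt rhoUinv) ^+ 2 * qnorm U (x - xstar).
Proof.
set e := x - xstar.
have psdU := posdef_psd posdefU.
have rhoU_gt0 := posdef_eigenvalue_gt0 posdefU rhoU_spec.1.
have rhoUinv_gt0 := posdef_invmx_eigenvalue_gt0 posdefU rhoUinv_spec.1.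
have rhoU_le1 : rhoU <= 1.
  apply: eigenvalue_le_of_qnorm_le rhoU_spec.1 => v.
  by rewrite mul1r qnorm_shift_le // ltW.
have Ue_le : qnorm U (U *m e) <= Num.sqrt rhoU ^+ 2 * qnorm U e.
  rewrite sqr_sqrtr ?(ltW rhoU_gt0) //.
  apply: le_trans (qnorm_mulmx_le (r := rhoU) _ psdU.1 _) _.
    move=> a eig_a; rewrite rhoU_spec.2 // andbT.
    exact/ltW/(posdef_eigenvalue_gt0 posdefU).
  by rewrite expr2 -mulrA ler_pM2l // ler_piMl // psdU.2.
have grad_le : qnorm U (- (alpha *: (grad fi x - grad fi xstar)))
    <= (alpha * L * Num.sqrt rhoUinv) ^+ 2 * qnorm U e.
  have -> : (alpha * L * Num.sqrt rhoUinv) ^+ 2 * qnorm U e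
      = alpha ^+ 2 * (L ^+ 2 * (rhoUinv * qnorm U e)).
    by rewrite !exprMn sqr_sqrtr ?(ltW rhoUinv_gt0) //; ring.
  rewrite qnormN qnormZ ler_wpM2l ?sqr_ge0 //.
  apply: le_trans (qnorm_shift_le _ psdB (ltW alpha_gt0)) _.
  apply: le_trans (sqnorm_grad_sub_le _ _ dfi_derivable d2fi_le) _.
  by rewrite ler_wpM2l ?sqr_ge0 // sqnorm_le_qnorm // => b; apply: rhoUinv_spec.2.
by apply: qnorm_add_sqr_le Ue_le grad_le; rewrite ?mulr_gt0 ?sqrtr_gt0.
Qed.

Lemma dual_error_le mu :
  qnorm U (alpha *: (A^T *m mu)) <= alpha ^+ 2 * rhoAA * sqnorm mu.
Proof.
rewrite qnormZ -mulrA ler_wpM2l ?sqr_ge0 //.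
apply: le_trans (qnorm_shift_le _ psdB (ltW alpha_gt0)) _.
have -> : sqnorm (A^T *m mu) = qnorm (A *m A^T) mu.
  by rewrite /sqnorm /qnorm trmx_mul trmxK !mulmxA.
by apply: qnorm_le_rho rhoAA_spec.2; rewrite trmx_mul trmxK.
Qed.

Lemma inner_step_contraction lam x :
  lyapunov (inner_step A B fi alpha lam x) lam <= Gamma * lyapunov x lam.
Proof.
set q := qnorm U (x - xstar); set r := sqnorm (lam - lamstar).
set c2 := (Num.sqrt rhoU + alpha * L * Num.sqrt rhoUinv) ^+ 2.
have q_ge0 : 0 <= q := (posdef_psd posdefU).2 _.
have r_ge0 : 0 <= r := sqnorm_ge0 _.
have p1_gt0 : 0 < p - 1 by rewrite subr_gt0.
have young := qnorm_add_le
  (U *m (x - xstar) - alpha *: (grad fi x - grad fi xstar))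
  (- (alpha *: (A^T *m (lam - lamstar)))) (posdef_psd posdefU) p1_gt0.
rewrite [1 + (p - 1)]addrC subrK qnormN in young.
have Gamma_dual : 1 + p * alpha * beta * rhoAA / (p - 1) <= Gamma by rewrite le_max lexx.
have Gamma_primal : p * c2 <= Gamma by rewrite le_max lexx orbT.
rewrite inner_step_subE; apply: le_trans (lerD young (lexx _)) _.
apply: (@le_trans _ _ (p * (c2 * q) +
    ((1 + (p - 1)^-1) * (alpha ^+ 2 * rhoAA * r) + alpha / beta * r))).
  rewrite -addrA; apply: lerD.
    by rewrite ler_wpM2l ?primal_error_le // ltW // (lt_trans ltr01).
  by rewrite lerD // ler_wpM2l ?dual_error_le // addr_ge0 ?invr_ge0 ?ltW.
have -> : (1 + (p - 1)^-1) * (alpha ^+ 2 * rhoAA * r) + alpha / beta * r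
    = (1 + p * alpha * beta * rhoAA / (p - 1)) * (alpha / beta * r).
  by field; rewrite !gt_eqF.
rewrite mulrDr [p * (c2 * q)]mulrA; apply: lerD; apply: ler_wpM2r => //.
by rewrite mulr_ge0 // divr_ge0 // ltW.
Qed.

Lemma inner_iter_contraction lam x t :
  lyapunov (inner_iter A B fi alpha lam x t) lam <= Gamma ^+ t * lyapunov x lam.
Proof.
have Gamma_ge0 : 0 <= Gamma.
  by rewrite le_max mulr_ge0 ?sqr_ge0 ?orbT // ltW // (lt_trans ltr01).
elim: t => [|t IHt]; first by rewrite expr0 mul1r.
rewrite /inner_iter iterS -/(inner_iter _ _ _ _ _ _ t).
apply: le_trans (inner_step_contraction _ _) _.
by apply: le_trans (ler_wpM2l Gamma_ge0 IHt) _; rewrite [Gamma ^+ t.+1]exprS mulrA.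
Qed.

End InnerStepContraction.

Theorem lemma3p3 (R : realType) (n eps : nat) (E : 'I_eps -> 'I_n * 'I_n)
  (B : 'M[R]_n) (fi : 'I_n -> R -> R) (m L : R)
  (xstar : 'cV[R]_n) (lamstar : 'cV[R]_eps)
  (alpha beta : R) (T : nat) (x0 : 'cV[R]_n) (p : R)
  (rhoAA rhoU rhoUinv : R) :
  simple_connected_graph E ->
  (* B: symmetric PSD, same null space as A, off-diagonal support on edges *)
  psd B ->
  (forall v : 'cV[R]_n, B *m v = 0 <-> incidence R E *m v = 0) ->
  (forall i j : 'I_n, i != j -> B i j != 0 ->
     exists e, E e = (i, j) \/ E e = (j, i)) ->
  (* f_i twice differentiable with m <= f_i'' <= L *)
  0 < m -> m <= L ->
  (forall i x, derivable (fi i) x 1 /\ derivable (derive1 (fi i)) x 1) ->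
  (forall i x, m <= derive1n 2 (fi i) x <= L) ->
  (* x* minimizer of f s.t. A x = 0; lambda* multiplier in the column space of A *)
  incidence R E *m xstar = 0 ->
  (forall x : 'cV[R]_n, incidence R E *m x = 0 -> fsum fi xstar <= fsum fi x) ->
  grad fi xstar + (incidence R E)^T *m lamstar = 0 ->
  B *m xstar = 0 ->
  (exists y : 'cV[R]_n, lamstar = incidence R E *m y) ->
  (* parameters *)
  0 < alpha -> 0 < beta -> (1 <= T)%N ->
  posdef (1%:M - alpha *: B) ->
  1 < p ->
  is_rho (incidence R E *m (incidence R E)^T) rhoAA ->
  is_rho (1%:M - alpha *: B) rhoU ->
  is_rho (invmx (1%:M - alpha *: B)) rhoUinv ->
  forall k : nat,
    let U := 1%:M - alpha *: B in
    let xk := (flexpd (incidence R E) B fi alpha beta T x0 k).1 in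
    let lamk := (flexpd (incidence R E) B fi alpha beta T x0 k).2 in
    let GammaF := Num.max (1 + p * alpha * beta * rhoAA / (p - 1))
                          (p * (Num.sqrt rhoU + alpha * L * Num.sqrt rhoUinv) ^+ 2) in
    qnorm U (inner_iter (incidence R E) B fi alpha lamk xk (T - 1) - xstar)
      + alpha / beta * sqnorm (lamk - lamstar)
    <= GammaF ^+ (T - 1) * (qnorm U (xk - xstar) + alpha / beta * sqnorm (lamk - lamstar)).
Proof.
move=> _ psdB _ _ m_gt0 m_le_L fi_derivable d2fi_bounds _ _ kkt Bxstar _
  alpha_gt0 beta_gt0 _ posdefU p_gt1 rhoAA_spec rhoU_spec rhoUinv_spec k.
have d2fi_le i x : `|derive1 (derive1 (fi i)) x| <= L.
  have /andP[m_le le_L] := d2fi_bounds i x.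
  by rewrite ger0_norm // (le_trans (ltW m_gt0) m_le).
exact: (inner_iter_contraction psdB posdefU alpha_gt0 beta_gt0 p_gt1
  (lt_le_trans m_gt0 m_le_L) (fun i x => (fi_derivable i x).2) d2fi_le
  kkt Bxstar rhoAA_spec rhoU_spec rhoUinv_spec).
Qed.
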